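(* Let $G$ be an esp-digraph. Then $\chi_o(G)\le 7$.
   Context: An oriented graph is a digraph without loops and without pairs of opposite arcs. For a digraph $G=(V,E)$ (parallel arcs allowed; the definitions apply verbatim), an oriented $r$-vertex-coloring is a map $c:V\to\{1,\dots,r\}$ such that (i) $c(u)\ne c(v)$ for every arc $(u,v)\in E$, and (ii) $c(u)\ne c(y)$ for every two arcs $(u,v),(x,y)\in E$ with $c(v)=c(x)$. Equivalently, $c$ is a homomorphism to an oriented graph on $r$ vertices. The oriented chromatic number $\chi_o(G)$ is the smallest $r$ for which such a coloring exists. Edge series-parallel (multi)digraphs (esp-digraphs) are defined recursively, each with a distinguished source and sink: (i) a digraph with two distinct vertices $u,v$ and the single arc $(u,v)$ is an esp-digraph with source $u$ and sink $v$; (ii) if $G_1,G_2$ are vertex-disjoint esp-digraphs, then the parallel composition $G_1\cup G_2$ (identify the source of $G_1$ with the source of $G_2$ and the sink of $G_1$ with the sink of $G_2$; arcs are united, possibly creating parallel arcs) is an esp-digraph with these identified source and sink, and the series composition $G_1\times G_2$ (identify the sink of $G_1$ with the source of $G_2$) is an esp-digraph with source the source of $G_1$ and sink the sink of $G_2$. *)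

From mathcomp Require Import all_boot.
Set Implicit Arguments. Unset Strict Implicit. Unset Printing Implicit Defensive.

(* A (multi)digraph is given by its list of arcs (a multiset: repetitions =
   parallel arcs) over vertex labels in nat.  Its vertex set is the set of
   endpoints of arcs (esp-digraphs have no isolated vertices). *)
Definition digraph := seq (nat * nat).

Definition vertices (E : digraph) : seq nat :=
  [seq a.1 | a <- E] ++ [seq a.2 | a <- E].

(* Edge series-parallel digraphs with distinguished source s and sink t.
   Vertex-disjointness of the two components (apart from the identified
   vertices) is enforced on the labels. *)
Inductive esp : digraph -> nat -> nat -> Prop :=
| esp_arc (u v : nat) : u <> v -> esp [:: (u, v)] u v
| esp_par (E1 E2 : digraph) (s t : nat) :
    esp E1 s t -> esp E2 s t ->
    (forall x, x \in vertices E1 -> x \in vertices E2 -> x = s \/ x = t) ->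
    esp (E1 ++ E2) s t
| esp_ser (E1 E2 : digraph) (s m t : nat) :
    esp E1 s m -> esp E2 m t ->
    (forall x, x \in vertices E1 -> x \in vertices E2 -> x = m) ->
    esp (E1 ++ E2) s t.

Definition oriented_coloring (r : nat) (E : digraph) (c : nat -> 'I_r) : Prop :=
  (forall u v, (u, v) \in E -> c u <> c v) /\
  (forall u v x y, (u, v) \in E -> (x, y) \in E -> c v = c x -> c u <> c y).

(* chi_o(G) <= r  iff  G has an oriented r-coloring (colorings with fewer
   colors are in particular r-colorings). *)
Definition chi_o_le (E : digraph) (r : nat) : Prop :=
  exists c : nat -> 'I_r, oriented_coloring E c.

From mathcomp Require Import all_boot.

(* Map G homomorphically to the Paley tournament QR_7 on Z/7 (a -> b iff b - a
   is a nonzero square mod 7), which is an oriented graph on 7 vertices.  By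
   induction on the esp-structure, G maps to any arc (a, b) of the target with
   source to a and sink to b: parallel compositions glue two such maps that agree
   on the shared source and sink, and series compositions route the arc through
   a vertex w with a -> w -> b.  Such a w exists in QR_7 for every arc. *)

Definition paley7 (a b : 'I_7) : bool := (b + 7 - a) %% 7 \in [:: 1; 2; 4].

(* The midpoint (a + b)/2 mod 7 (4 is the inverse of 2): both halves of the arc
   have difference (b - a)/2, again a square since 2 is one. *)
Definition paley7_mid (a b : 'I_7) : 'I_7 := inord ((a + 4 * (b + 7 - a)) %% 7).

Lemma paley7_split (a b : 'I_7) :
  paley7 a b -> exists2 w, paley7 a w & paley7 w b.
Proof.
move=> ab; exists (paley7_mid a b); move: ab;
  rewrite /paley7 /paley7_mid inordK ?ltn_mod //;
  by case: a b => [[|[|[|[|[|[|[|?]]]]]]] ?] [[|[|[|[|[|[|[|?]]]]]]] ?].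
Qed.

Lemma paley7_asym (a b : 'I_7) : paley7 a b -> ~~ paley7 b a.
Proof. by case: a b => [[|[|[|[|[|[|[|?]]]]]]] ?] [[|[|[|[|[|[|[|?]]]]]]] ?]. Qed.

Lemma hom_oriented_coloring r (R : rel 'I_r) (E : digraph) (c : nat -> 'I_r) :
  (forall a b, R a b -> ~~ R b a) ->
  (forall u v, (u, v) \in E -> R (c u) (c v)) ->
  oriented_coloring E c.
Proof.
move=> asymR homc; split.
  move=> u v /homc Ruv Ecuv; move: Ruv (asymR _ _ Ruv).
  by rewrite Ecuv => ->.
move=> u v x y /homc Ruv /homc Rxy Ecvx Ecuy.
by move: Ruv (asymR _ _ Rxy); rewrite Ecvx Ecuy => ->.
Qed.

Lemma mem_vertices_l {E : digraph} {u v} : (u, v) \in E -> u \in vertices E.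
Proof. by move=> Euv; rewrite mem_cat (map_f fst Euv). Qed.

Lemma mem_vertices_r {E : digraph} {u v} : (u, v) \in E -> v \in vertices E.
Proof. by move=> Euv; rewrite mem_cat (map_f snd Euv) orbT. Qed.

Lemma vertices_cat (E1 E2 : digraph) x :
  (x \in vertices (E1 ++ E2)) = (x \in vertices E1) || (x \in vertices E2).
Proof. by rewrite !mem_cat !map_cat !mem_cat orbACA. Qed.

Lemma esp_source_sink {E : digraph} {s t} :
  esp E s t -> (s \in vertices E) && (t \in vertices E).
Proof.
elim=> {E s t} [u v _ | E1 E2 s t _ st1 _ _ _ | E1 E2 s m t _ sm1 _ mt2 _].
- by rewrite (mem_vertices_l (mem_head _ _)) (mem_vertices_r (mem_head _ _)).
- by case/andP: st1 => s1 t1; rewrite !vertices_cat s1 t1.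
- case/andP: sm1 => s1 _; case/andP: mt2 => _ t2.
  by rewrite !vertices_cat s1 t2 orbT.
Qed.

Section Homomorphisms.

Variables (T : Type) (R : rel T).

Definition glue (E1 : digraph) (c1 c2 : nat -> T) (x : nat) : T :=
  if x \in vertices E1 then c1 x else c2 x.

Lemma glue_hom (E1 E2 : digraph) (c1 c2 : nat -> T) :
  (forall x, x \in vertices E1 -> x \in vertices E2 -> c1 x = c2 x) ->
  (forall u v, (u, v) \in E1 -> R (c1 u) (c1 v)) ->
  (forall u v, (u, v) \in E2 -> R (c2 u) (c2 v)) ->
  forall u v, (u, v) \in E1 ++ E2 -> R (glue E1 c1 c2 u) (glue E1 c1 c2 v).
Proof.
move=> agree hom1 hom2 u v; rewrite mem_cat => /orP[] Euv.
  by rewrite /glue (mem_vertices_l Euv) (mem_vertices_r Euv); apply: hom1.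
have glue2 x : x \in vertices E2 -> glue E1 c1 c2 x = c2 x.
  by rewrite /glue; case: ifP => // E1x; apply: agree.
by rewrite (glue2 _ (mem_vertices_l Euv)) (glue2 _ (mem_vertices_r Euv)) hom2.
Qed.

Hypothesis R_mid : forall a b, R a b -> exists2 w, R a w & R w b.

Lemma esp_hom_extend (E : digraph) s t : esp E s t ->
  forall a b, R a b -> exists c : nat -> T,
    [/\ c s = a, c t = b & forall u v, (u, v) \in E -> R (c u) (c v)].
Proof.
elim=> {E s t} [u v neq_uv | E1 E2 s t _ IH1 _ IH2 shared
               | E1 E2 s m t esp1 IH1 esp2 IH2 shared] a b Rab.
- exists (fun x => if x == u then a else b).
  split=> [|| x y]; rewrite ?eqxx; first by [].
    by case: eqP => // /esym.
  by rewrite inE => /eqP[-> ->]; rewrite eqxx; case: eqP => // /esym.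
- have [c1 [s1 t1 hom1]] := IH1 a b Rab; have [c2 [s2 t2 hom2]] := IH2 a b Rab.
  have agree x : x \in vertices E1 -> x \in vertices E2 -> c1 x = c2 x.
    by move=> X1 X2; case: (shared x X1 X2) => ->; rewrite ?s1 ?s2 ?t1 ?t2.
  exists (glue E1 c1 c2); split; last exact: glue_hom.
  + by rewrite /glue; case: ifP.
  + by rewrite /glue; case: ifP.
- have [w Raw Rwb] := R_mid a b Rab.
  have [c1 [s1 m1 hom1]] := IH1 a w Raw; have [c2 [m2 t2 hom2]] := IH2 w b Rwb.
  have agree x : x \in vertices E1 -> x \in vertices E2 -> c1 x = c2 x.
    by move=> X1 X2; rewrite (shared x X1 X2) m1 m2.
  have /andP[s_E1 _] := esp_source_sink esp1.
  have /andP[_ t_E2] := esp_source_sink esp2.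
  exists (glue E1 c1 c2); split; last exact: glue_hom.
  + by rewrite /glue s_E1.
  + by rewrite /glue; case: ifP => // t_E1; rewrite (agree t t_E1 t_E2).
Qed.

End Homomorphisms.

Theorem theorem3 (E : digraph) (s t : nat) : esp E s t -> chi_o_le E 7.
Proof.
move=> espE.
have arc01 : paley7 (@Ordinal 7 0 isT) (@Ordinal 7 1 isT) by [].
have [c [_ _ homc]] := @esp_hom_extend _ paley7 paley7_split _ _ _ espE _ _ arc01.
by exists c; apply: hom_oriented_coloring paley7_asym homc.
Qed.
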